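(* Let $k$ be a field, $R=k[x,y]$, $I=(x^d,y^d,x^by^{d-b})$ with $d\ge2$, $1\le b\le d-b$, $\gcd(d,b)=1$, $J=(x^d,y^d)$, and for $\ell\ge1$ write $JI^{\ell-1}:I^\ell=(x^{s_\ell},y^{t_\ell})$ with nonnegative integers $s_\ell,t_\ell$. Then: (i) there is a least index $\ell_0\ge1$ such that $s_{\ell_0}=1$ or $t_{\ell_0}=1$; (ii) there is a least index $\ell_0'\ge1$ such that $s_{\ell_0'}=t_{\ell_0'}=1$, i.e. $JI^{\ell_0'-1}:I^{\ell_0'}=(x,y)$; (iii) $\ell_0'\ge d-\ell_0$. *)

(* R = k[x,y] is modelled as {poly {poly k}}:
   x is the inner variable (embedded as a constant), y the outer one. *)
From HB Require Import structures.
From mathcomp Require Import all_boot all_order all_algebra.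
Set Implicit Arguments. Unset Strict Implicit. Unset Printing Implicit Defensive.
Import GRing.Theory.
Local Open Scope ring_scope.

Section Bivariate.
Variable k : fieldType.

Definition bipoly := {poly {poly k}}.
Definition varx : bipoly := ('X : {poly k})%:P.
Definition vary : bipoly := 'X.

Definition in_ideal (gs : seq bipoly) (f : bipoly) : Prop :=
  exists cs : seq bipoly, size cs = size gs /\
    f = \sum_(i < size gs) cs`_i * gs`_i.

Definition gens_mul (gs hs : seq bipoly) : seq bipoly :=
  [seq a * b | a <- gs, b <- hs].

Fixpoint gens_pow (gs : seq bipoly) (n : nat) : seq bipoly :=
  if n is n'.+1 then gens_mul gs (gens_pow gs n') else [:: 1].

Definition in_colon (A B : seq bipoly) (f : bipoly) : Prop :=
  forall g, in_ideal B g -> in_ideal A (f * g).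

Definition Igens (d b : nat) : seq bipoly :=
  [:: varx ^+ d; vary ^+ d; varx ^+ b * vary ^+ (d - b)].
Definition Jgens (d : nat) : seq bipoly := [:: varx ^+ d; vary ^+ d].

Definition in_colonJI (d b l : nat) (f : bipoly) : Prop :=
  in_colon (gens_mul (Jgens d) (gens_pow (Igens d b) l.-1))
           (gens_pow (Igens d b) l) f.

End Bivariate.

From HB Require Import structures.
From mathcomp Require Import all_boot all_order all_algebra.
From mathcomp Require Import zify.
Set Implicit Arguments. Unset Strict Implicit. Unset Printing Implicit Defensive.
Import GRing.Theory.
Local Open Scope ring_scope.

(* All ideals involved are monomial.  A generator x^(dj+bi) y^(dk+(d-b)i),
   i + j + k = l, of I^l with i < l already lies in J I^(l-1), so membership in
   J I^(l-1) : I^l is tested on x^(bl) y^((d-b)l) alone; and x^(bl+a) y^((d-b)l+c)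
   lies in J I^(l-1) iff b m <= d j + c and d j <= b m + a for some 0 < m <= l,
   j <= m.  For l < d coprimality rules out d j = b m, hence 1 is never in the
   colon ideal, x is in it iff d | b m + 1 for some 0 < m <= l, and y iff
   d | b m - 1 for some 0 < m <= l.  Thus s_l = 1 exactly from the least solution
   m1 of the first congruence on, t_l = 1 from the least solution m2 of the second
   on, l0 = min(m1, m2), l0' = max(m1, m2), and d | b (m1 + m2) gives
   m1 + m2 >= d. *)

Section MonomialIdeals.
Variable k : fieldType.
Local Notation P := (bipoly k).

Definition mono (e f : nat) : P := varx k ^+ e * vary k ^+ f.

Lemma monoM e f e' f' : mono e f * mono e' f' = mono (e + e') (f + f').
Proof. by rewrite /mono !exprD mulrACA. Qed.

Lemma mono_varx e : varx k ^+ e = mono e 0.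
Proof. by rewrite /mono mulr1. Qed.

Lemma mono_vary f : vary k ^+ f = mono 0 f.
Proof. by rewrite /mono mul1r. Qed.

Lemma varx_mono : varx k = mono 1 0.
Proof. by rewrite -mono_varx expr1. Qed.

Lemma vary_mono : vary k = mono 0 1.
Proof. by rewrite -mono_vary expr1. Qed.

Definition mcoef (A C : nat) (p : P) : k := (p`_C)`_A.

Lemma mcoef_sum A C n (F : 'I_n -> P) :
  mcoef A C (\sum_(i < n) F i) = \sum_(i < n) mcoef A C (F i).
Proof. by rewrite /mcoef !coef_sum. Qed.

Lemma mcoef_mulmono c e f A C : mcoef A C (c * mono e f) =
  if (e <= A)%N && (f <= C)%N then mcoef (A - e) (C - f) c else 0.
Proof.
rewrite /mcoef /mono /varx /vary -polyC_exp mulrA.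
rewrite (coefMXn (R := {poly k})) (coefMC (R := {poly k})).
case: (ltnP C f) => _; rewrite ?andbF ?coef0 //= andbT.
by rewrite coefMXn; case: (ltnP A e).
Qed.

Lemma mcoef_mono e f A C : mcoef A C (mono e f) = ((e == A) && (f == C))%:R.
Proof.
rewrite -[mono e f]mul1r mcoef_mulmono /mcoef coef1.
case: (leqP e A) => eA; case: (leqP f C) => fC /=;
  try by rewrite ?(gtn_eqF eA) ?(gtn_eqF fC) ?andbF.
rewrite !eqn_leq eA fC /= -[(A <= e)%N]subn_eq0 -[(C <= f)%N]subn_eq0.
by case: (C - f)%N => [|n]; case: (A - e)%N => [|m];
  rewrite /= ?mulr1n ?mulr0n ?coef1 ?coef0.
Qed.

Lemma mono_inj e f e' f' : mono e f = mono e' f' -> e = e' /\ f = f'.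
Proof.
move=> E; have := mcoef_mono e f e f; rewrite E mcoef_mono !eqxx.
case: eqP => [->|_]; case: eqP => [->|_] //=;
  by rewrite mulr0n mulr1n => /eqP; rewrite eq_sym oner_eq0.
Qed.

Lemma in_ideal0 (gs : seq P) : in_ideal gs 0.
Proof.
exists (nseq (size gs) 0); split; first by rewrite size_nseq.
by rewrite big1 // => i _; rewrite nth_nseq if_same mul0r.
Qed.

Lemma in_idealD (gs : seq P) f g :
  in_ideal gs f -> in_ideal gs g -> in_ideal gs (f + g).
Proof.
move=> [cs [_ ->]] [cs' [_ ->]].
exists (mkseq (fun j => cs`_j + cs'`_j) (size gs)); split; first by rewrite size_mkseq.
by rewrite -big_split; apply: eq_bigr => i _; rewrite nth_mkseq // mulrDl.
Qed.

Lemma in_idealMl (gs : seq P) h f : in_ideal gs f -> in_ideal gs (h * f).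
Proof.
move=> [cs [Hs ->]]; exists (map ( *%R h) cs); split; first by rewrite size_map.
by rewrite mulr_sumr; apply: eq_bigr => i _; rewrite (nth_map 0) ?mulrA ?Hs.
Qed.

Lemma in_ideal_mem (gs : seq P) g : g \in gs -> in_ideal gs g.
Proof.
move=> gs_g; have gs_i : (index g gs < size gs)%N by rewrite index_mem.
pose i := Ordinal gs_i.
exists (mkseq (fun j => (j == i)%:R) (size gs)); split; first by rewrite size_mkseq.
rewrite (bigD1 i) //= nth_mkseq // eqxx mul1r nth_index // big1 ?addr0 // => j ji.
have /negbTE ji' : (j : nat) != i by [].
by rewrite nth_mkseq // ji' mul0r.
Qed.

Lemma in_colon_gensP (A B : seq P) f :
  in_colon A B f <-> {in B, forall g, in_ideal A (f * g)}.
Proof.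
split=> [colon g Bg | gens g [cs [_ ->]]]; first exact/colon/in_ideal_mem.
rewrite mulr_sumr; apply: (big_ind (in_ideal A)) => //; [exact: in_ideal0|exact: in_idealD|].
by move=> i _; rewrite mulrCA; apply/in_idealMl/gens/mem_nth.
Qed.

Lemma in_ideal_monoP (gs : seq P) A C :
  {in gs, forall g, exists e f, g = mono e f} ->
  in_ideal gs (mono A C) <-> exists e f, [/\ mono e f \in gs, e <= A & f <= C]%N.
Proof.
move=> gs_mono; split=> [[cs [_ E]] | [e [f [gs_ef eA fC]]]]; last first.
  have -> : mono A C = mono (A - e) (C - f) * mono e f by rewrite monoM !subnK.
  exact/in_idealMl/in_ideal_mem.
have [/existsP [i] | all0] := boolP [exists i : 'I_(size gs), mcoef A C (cs`_i * gs`_i) != 0].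
  have [e [f gs_i]] := gs_mono _ (mem_nth 0 (ltn_ord i)).
  rewrite gs_i mcoef_mulmono; case: ifP => [/andP [eA fC] _ | _]; last by rewrite eqxx.
  by exists e, f; rewrite -gs_i mem_nth.
have := mcoef_mono A C A C; rewrite E mcoef_sum big1 ?eqxx /=.
  by move/eqP; rewrite mulr1n eq_sym oner_eq0.
by move=> i _; apply/eqP; move: all0; rewrite negb_exists => /forallP /(_ i); rewrite negbK.
Qed.

Lemma in_ideal_pairP s t A C :
  in_ideal [:: varx k ^+ s; vary k ^+ t] (mono A C) <-> (s <= A)%N \/ (t <= C)%N.
Proof.
rewrite mono_varx mono_vary in_ideal_monoP; last first.
  by move=> g; rewrite !inE => /orP [] /eqP ->; do 2!eexists.
split=> [[e [f [/[!inE] /orP [] /eqP /mono_inj [-> ->] eA fC]]] | [sA | tC]].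
- by left.
- by right.
- by exists s, 0%N; rewrite inE eqxx.
- by exists 0%N, t; rewrite !inE eqxx orbT.
Qed.

Lemma in_proper_pair_varP s t :
  ~ in_ideal [:: varx k ^+ s; vary k ^+ t] 1 ->
  (in_ideal [:: varx k ^+ s; vary k ^+ t] (varx k) <-> s = 1%N) /\
  (in_ideal [:: varx k ^+ s; vary k ^+ t] (vary k) <-> t = 1%N).
Proof.
have mono00 : mono 0 0 = 1 by rewrite /mono !expr0 mulr1.
move: (in_ideal_pairP s t 0 0) (in_ideal_pairP s t 1 0) (in_ideal_pairP s t 0 1).
rewrite mono00 -varx_mono -vary_mono => -> -> ->; lia.
Qed.
End MonomialIdeals.

Section PowersOfI.
Variables (k : fieldType) (d b : nat).
Local Open Scope nat_scope.
Local Notation mono := (@mono k).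
Local Notation Imono i j kk := (mono (d * j + b * i) (d * kk + (d - b) * i)).
Local Notation JIgens l := (gens_mul (Jgens k d) (gens_pow (Igens k d b) l.-1)).

Lemma Igens_mono : Igens k d b = [:: mono d 0; mono 0 d; mono b (d - b)].
Proof. by rewrite /Igens mono_varx mono_vary. Qed.

Lemma mem_gens_pow_I n g : g \in gens_pow (Igens k d b) n <->
  exists i j kk, i + j + kk = n /\ g = Imono i j kk.
Proof.
elim: n g => [|n IHn] g /=.
  have mono00 : Imono 0 0 0 = 1%R by rewrite !muln0 /mono !expr0 mulr1.
  rewrite inE; split=> [/eqP -> | [i [j [kk [ijk ->]]]]]; first by exists 0, 0, 0; rewrite mono00.
  have [-> -> ->] : [/\ i = 0, j = 0 & kk = 0] by split; lia.
  by rewrite mono00.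
split.
  case/allpairsP => [[a h] [/= Ia Ih ->]].
  have [i [j [kk [ijk ->]]]] := (IHn h).1 Ih.
  move: Ia; rewrite Igens_mono !inE => /or3P [] /eqP ->; rewrite monoM.
  - by exists i, j.+1, kk; split; [lia | congr mono; lia].
  - by exists i, j, kk.+1; split; [lia | congr mono; lia].
  - by exists i.+1, j, kk; split; [lia | congr mono; lia].
case=> i [j [kk [ijk ->]]]; apply/allpairsP.
case: i ijk => [|i] ijk; first case: j ijk => [|j] ijk; first case: kk ijk => [|kk] ijk.
- by [].
- exists (mono 0 d, Imono 0 0 kk); split=> /=; first by rewrite Igens_mono !inE eqxx orbT.
    by apply/IHn; exists 0, 0, kk; split=> //; lia.
  by rewrite monoM; congr mono; lia.
- exists (mono d 0, Imono 0 j kk); split=> /=; first by rewrite Igens_mono !inE eqxx.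
    by apply/IHn; exists 0, j, kk; split=> //; lia.
  by rewrite monoM; congr mono; lia.
- exists (mono b (d - b), Imono i j kk); split=> /=; first by rewrite Igens_mono !inE eqxx !orbT.
    by apply/IHn; exists i, j, kk; split=> //; lia.
  by rewrite monoM; congr mono; lia.
Qed.

Lemma mem_JIgens l g : 0 < l -> g \in JIgens l <->
  exists i j kk, [/\ i + j + kk = l, i < l & g = Imono i j kk].
Proof.
move=> l_gt0; split.
  case/allpairsP => [[a h] [/= Ja Ih ->]].
  have [i [j [kk [ijk ->]]]] := (mem_gens_pow_I _ h).1 Ih.
  move: Ja; rewrite /Jgens mono_varx mono_vary !inE => /orP [] /eqP ->; rewrite monoM.
  - by exists i, j.+1, kk; split; [lia | lia | congr mono; lia].
  - by exists i, j, kk.+1; split; [lia | lia | congr mono; lia].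
case=> i [j [kk [ijk il ->]]]; apply/allpairsP.
case: j ijk => [|j] ijk; first case: kk ijk => [|kk] ijk; first lia.
- exists (mono 0 d, Imono i 0 kk); split=> /=; first by rewrite /Jgens mono_vary !inE eqxx orbT.
    by apply/mem_gens_pow_I; exists i, 0, kk; split=> //; lia.
  by rewrite monoM; congr mono; lia.
- exists (mono d 0, Imono i j kk); split=> /=; first by rewrite /Jgens mono_varx !inE eqxx.
    by apply/mem_gens_pow_I; exists i, j, kk; split=> //; lia.
  by rewrite monoM; congr mono; lia.
Qed.

Lemma in_colonJI_mono l f : 0 < l ->
  in_colonJI d b l f <-> in_ideal (JIgens l) (f * mono (b * l) ((d - b) * l))%R.
Proof.
move=> l_gt0; have Il : mono (b * l) ((d - b) * l) = Imono l 0 0 by rewrite !muln0.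
rewrite /in_colonJI in_colon_gensP Il.
split=> [colon | JIf g /mem_gens_pow_I [i [j [kk [ijk ->]]]]].
  by apply: colon; apply/mem_gens_pow_I; exists l, 0, 0; rewrite !addn0.
have [il | li] := ltnP i l.
  by apply/in_idealMl/in_ideal_mem/mem_JIgens => //; exists i, j, kk.
by have [-> -> ->] : [/\ i = l, j = 0 & kk = 0] by split; lia.
Qed.

Lemma in_JIgens_monoP l a c : b <= d -> 0 < l ->
  in_ideal (JIgens l) (mono (b * l + a) ((d - b) * l + c)) <->
  exists m j, [/\ 0 < m <= l, j <= m, b * m <= d * j + c & d * j <= b * m + a].
Proof.
move=> b_le_d l_gt0; have [r dr] : exists r, d = b + r by exists (d - b); lia.
rewrite in_ideal_monoP; last first.
  by move=> g /mem_JIgens [// | i [j [kk [_ _ ->]]]]; do 2!eexists.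
split=> [[e [f [/mem_JIgens [// | i [j [kk [ijk il /mono_inj [-> ->]]]]] eA fC]]]
        | [m [j [/andP [m_gt0 ml] jm bmj djm]]]].
  by exists (j + kk), j; move: eA fC; rewrite -ijk dr addKn => eA fC; split; lia.
have [n ln] : exists n, l = m + n by exists (l - m); lia.
have [q mq] : exists q, m = j + q by exists (m - j); lia.
exists (d * j + b * n), (d * q + (d - b) * n); split.
- by apply/mem_JIgens => //; exists n, j, q; split=> //; lia.
- by move: djm; rewrite ln; lia.
- by move: bmj; rewrite ln mq dr addKn; lia.
Qed.
End PowersOfI.

Section ColonJI.
Variables (k : fieldType) (d b : nat).
Local Open Scope nat_scope.
Hypotheses (b_gt0 : 0 < b) (b_lt_d : b < d) (coprime_db : coprime d b).

Lemma coprime_mul_neq m j : 0 < m < d -> d * j != b * m.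
Proof.
move=> /andP [m_gt0 m_lt_d]; apply/eqP => djm.
have : d %| m by rewrite -(Gauss_dvdr m coprime_db) -djm dvdn_mulr.
by move/(dvdn_leq m_gt0); lia.
Qed.

Lemma one_notin_colonJI l : 0 < l < d -> ~ in_colonJI d b l (1 : bipoly k)%R.
Proof.
move=> /andP [l_gt0 l_lt_d]; rewrite in_colonJI_mono // mul1r -[b * l]addn0 -[(d - b) * l]addn0.
rewrite (in_JIgens_monoP _ _ _ (ltnW b_lt_d) l_gt0) => -[m [j [/andP [m_gt0 ml] _ bmj djm]]].
have /eqP : (d * j = b * m) by lia.
by apply/negP/coprime_mul_neq; lia.
Qed.

Lemma varx_in_colonJIP l : 0 < l < d ->
  in_colonJI d b l (varx k) <-> exists2 m, 0 < m <= l & d %| b * m + 1.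
Proof.
move=> /andP [l_gt0 l_lt_d].
rewrite in_colonJI_mono // varx_mono monoM addnC add0n -[(d - b) * l]addn0.
rewrite (in_JIgens_monoP _ _ _ (ltnW b_lt_d) l_gt0).
split=> [[m [j [/andP [m_gt0 ml] _ bmj djm]]] | [m /andP [m_gt0 ml] /dvdnP [j Ej]]].
  have /negbTE : d * j != b * m by apply: coprime_mul_neq; lia.
  by exists m; [lia | apply/dvdnP; exists j; lia].
have jm : j <= m by rewrite -(leq_pmul2r (ltn_trans b_gt0 b_lt_d)) -Ej; nia.
by exists m, j; split; lia.
Qed.

Lemma vary_in_colonJIP l : 0 < l < d ->
  in_colonJI d b l (vary k) <-> exists2 m, 0 < m <= l & d %| b * m - 1.
Proof.
move=> /andP [l_gt0 l_lt_d].
rewrite in_colonJI_mono // vary_mono monoM add0n addnC -[b * l]addn0.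
rewrite (in_JIgens_monoP _ _ _ (ltnW b_lt_d) l_gt0).
split=> [[m [j [/andP [m_gt0 ml] _ bmj djm]]] | [m /andP [m_gt0 ml] /dvdnP [j Ej]]].
  have /negbTE : d * j != b * m by apply: coprime_mul_neq; lia.
  by exists m; [lia | apply/dvdnP; exists j; lia].
have jm : j <= m by rewrite -(leq_pmul2r (ltn_trans b_gt0 b_lt_d)) -Ej; nia.
by exists m, j; split; lia.
Qed.
End ColonJI.

Section Indices.
Local Open Scope nat_scope.

Lemma coprime_inv_mod d b : 1 < d -> coprime d b -> exists2 m, 0 < m < d & d %| b * m + 1.
Proof.
move=> d_gt1 coprime_db; have [a a_lt_d] := Bezoutl b (ltnW d_gt1).
rewrite (eqP coprime_db) addnC mulnC => inv_a; exists a => //.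
by rewrite a_lt_d andbT lt0n; apply: contraTneq inv_a => ->; rewrite muln0 dvdn1; lia.
Qed.

Lemma dvdn_inv_mod_compl d b m : d %| b * m + 1 -> d %| b * (d - m) - 1.
Proof. by move=> inv_m; rewrite mulnBr -subnDA dvdn_sub // dvdn_mull. Qed.

Lemma leq_add_inv_mod d b m m' : coprime d b -> 0 < b * m' ->
  d %| b * m + 1 -> d %| b * m' - 1 -> d <= m + m'.
Proof.
move=> coprime_db bm'_gt0 inv_m inv_m'.
have : d %| b * (m + m').
  have -> : b * (m + m') = (b * m + 1) + (b * m' - 1) by lia.
  exact: dvdn_add.
rewrite Gauss_dvdr // => /dvdn_leq; apply; move: bm'_gt0; rewrite muln_gt0; lia.
Qed.

Lemma least_inv_mods d b : 1 < d -> 0 < b -> coprime d b ->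
  exists m1 m2, [/\ 0 < m1 < d, 0 < m2 < d, d <= m1 + m2,
    forall l, (exists2 m, 0 < m <= l & d %| b * m + 1) <-> m1 <= l
  & forall l, (exists2 m, 0 < m <= l & d %| b * m - 1) <-> m2 <= l].
Proof.
move=> d_gt1 b_gt0 coprime_db.
have [a /andP [a_gt0 a_lt_d] inv_a] := coprime_inv_mod d_gt1 coprime_db.
have ex1 : exists m, (0 < m) && (d %| b * m + 1) by exists a; rewrite a_gt0.
have [m1 /andP [m1_gt0 inv_m1] m1_min] := ex_minnP ex1.
have m1_lt_d : m1 < d by apply: leq_ltn_trans (m1_min a _) a_lt_d; rewrite a_gt0.
have inv_compl : (0 < d - m1) && (d %| b * (d - m1) - 1).
  by rewrite subn_gt0 m1_lt_d dvdn_inv_mod_compl.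
have ex2 : exists m, (0 < m) && (d %| b * m - 1) by exists (d - m1).
have [m2 /andP [m2_gt0 inv_m2] m2_min] := ex_minnP ex2.
have m2_le := m2_min _ inv_compl.
exists m1, m2; split.
- by rewrite m1_gt0.
- by rewrite m2_gt0; lia.
- by apply: leq_add_inv_mod inv_m1 inv_m2; rewrite // muln_gt0 b_gt0.
- move=> l; split=> [[m /andP [m_gt0 ml] inv_m] | m1l]; last by exists m1; rewrite ?m1_gt0.
  by apply: leq_trans ml; apply: m1_min; rewrite m_gt0.
- move=> l; split=> [[m /andP [m_gt0 ml] inv_m] | m2l]; last by exists m2; rewrite ?m2_gt0.
  by apply: leq_trans ml; apply: m2_min; rewrite m_gt0.
Qed.

Lemma least_indices (S T : nat -> Prop) d m1 m2 :
  0 < m1 < d -> 0 < m2 < d -> d <= m1 + m2 ->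
  (forall l, 0 < l < d -> S l <-> m1 <= l) ->
  (forall l, 0 < l < d -> T l <-> m2 <= l) ->
  exists l0 l0',
    [/\ 1 <= l0 /\ (S l0 \/ T l0) /\ (forall l, 1 <= l < l0 -> ~ (S l \/ T l)),
        1 <= l0' /\ (S l0' /\ T l0') /\ (forall l, 1 <= l < l0' -> ~ (S l /\ T l))
      & d - l0 <= l0'].
Proof.
move=> m1_range m2_range m12 HS HT.
have S_ge l : S l -> 0 < l < d -> m1 <= l by move=> Sl /HS [/(_ Sl)].
have T_ge l : T l -> 0 < l < d -> m2 <= l by move=> Tl /HT [/(_ Tl)].
have S_le l : 0 < l < d -> m1 <= l -> S l by move/HS => [].
have T_le l : 0 < l < d -> m2 <= l -> T l by move/HT => [].
exists (minn m1 m2), (maxn m1 m2); split; last by lia.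
- split; first by lia.
  split; last by move=> l ll [/S_ge | /T_ge]; lia.
  by case: (leqP m1 m2) => ?; [left; apply: S_le | right; apply: T_le]; lia.
- split; first by lia.
  split; last by move=> l ll [/S_ge ? /T_ge ?]; lia.
  by split; [apply: S_le | apply: T_le]; lia.
Qed.
End Indices.

Theorem mainTheorem10 (k : fieldType) (d b : nat) (s t : nat -> nat) :
  (2 <= d)%N -> (1 <= b)%N -> (b <= d - b)%N -> coprime d b ->
  (forall l, (1 <= l)%N ->
     (forall f : bipoly k, in_colonJI d b l f <->
        in_ideal [:: varx k ^+ s l; vary k ^+ t l] f)
     /\ (s l == 0%N) = (t l == 0%N)) ->
  exists l0 l0' : nat,
    [/\ (1 <= l0)%N /\ (s l0 = 1%N \/ t l0 = 1%N)
        /\ (forall l, (1 <= l < l0)%N -> ~ (s l = 1%N \/ t l = 1%N)),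
        (1 <= l0')%N /\ (s l0' = 1%N /\ t l0' = 1%N)
        /\ (forall l, (1 <= l < l0')%N -> ~ (s l = 1%N /\ t l = 1%N))
      & (d - l0 <= l0')%N].
Proof.
move=> d_ge2 b_gt0 b_le_db coprime_db colon; have b_lt_d : (b < d)%N by lia.
have [m1 [m2 [m1_range m2_range m12 m1P m2P]]] := least_inv_mods d_ge2 b_gt0 coprime_db.
have pair l : (0 < l < d)%N ->
    (in_colonJI d b l (varx k) <-> s l = 1%N) /\ (in_colonJI d b l (vary k) <-> t l = 1%N).
  move=> /andP [l_gt0 l_lt_d].
  (* [s l, t l > 0] already follows from [one_notin_colonJI]. *)
  have [colon_l _] := colon l l_gt0.
  have proper : ~ in_ideal [:: varx k ^+ s l; vary k ^+ t l] 1.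
    by move/colon_l; apply: one_notin_colonJI => //; rewrite l_gt0.
  by rewrite !colon_l; apply: in_proper_pair_varP.
apply: (least_indices m1_range m2_range m12) => l l_range.
- by rewrite -(pair l l_range).1 varx_in_colonJIP.
- by rewrite -(pair l l_range).2 vary_in_colonJIP.
Qed.
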